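(* Let $\lambda\in\mathbb{R}$, $\alpha=1-\lambda$, and let $\mathcal{Q}_\lambda$ be the $\lambda$-exponential family with sufficient statistic $T$ and base measure $m$. Assume that $\alpha>0$ and that $\varphi_\lambda$ is proper. Let $\vartheta\in\operatorname{dom}\varphi_\lambda$ and $p\in\mathcal{P}(\mathcal{X},m)$. If $p$ is $q_\vartheta$-compatible, then $c_\lambda\big(\vartheta,\,p^{(\alpha)}_{|S_\vartheta}(T)\big)\in\mathbb{R}$.
   Context: $\mathcal{H}$ is a finite-dimensional real Hilbert space with inner product $\langle\cdot,\cdot\rangle$; $\mathcal{X}$ is a measurable space (Borel $\sigma$-algebra) with a measure $m$; $\mathcal{P}(\mathcal{X},m)$ is the set of probability distributions having a density with respect to $m$ (identified with their densities). For a density $p$ and measurable $f$ (possibly $\mathcal H$-valued), $p(f)=\int f(x)p(x)\,m(dx)$. Conventions: $\log s=-\infty$ for $s\le 0$ and $\exp(-\infty)=0$. The coupling is $c_\lambda(u,v)=\frac1\lambda\log(1+\lambda\langle u,v\rangle)$ for $\lambda\neq0$ and $c_0(u,v)=\langle u,v\rangle$. Given a measurable $T:\mathcal X\to\mathcal H$, the $\lambda$-log-partition function is $\varphi_\lambda(\vartheta)=\log\int\exp(c_\lambda(\vartheta,T(x)))\,m(dx)$, $\operatorname{dom}\varphi_\lambda=\{\vartheta\in\mathcal H:\varphi_\lambda(\vartheta)<+\infty\}$, and for $\vartheta\in\operatorname{dom}\varphi_\lambda$, $q_\vartheta(x)=\exp(c_\lambda(\vartheta,T(x))-\varphi_\lambda(\vartheta))$;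 $\mathcal Q_\lambda=\{q_\vartheta:\vartheta\in\operatorname{dom}\varphi_\lambda\}$. $\varphi_\lambda$ proper means it never takes the value $-\infty$ and $\operatorname{dom}\varphi_\lambda\neq\emptyset$. The support of $q_\vartheta$ is $S_\vartheta=\{x\in\mathcal X:1+\lambda\langle\vartheta,T(x)\rangle>0\}$ (equal to $\mathcal X$ when $\lambda=0$). For $Y\subset\mathcal X$, $p_{|Y}=p\,\mathbf 1_Y$ is the restriction of $p$ to $Y$. For $\alpha>0$ the escort of a nonnegative function $p$ is $p^{(\alpha)}=p^\alpha/\int p^\alpha\,dm$ (when the normalizing constant is finite and positive), and $p^{(\alpha)}_{|Y}$ denotes the escort of $p_{|Y}$. A density $p$ is $q_\vartheta$-compatible if $\int p_{|S_\vartheta}(x)^\alpha m(dx)\in(0,+\infty)$ and $\int T(x)p_{|S_\vartheta}(x)^\alpha m(dx)$ has finite components. *)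

From HB Require Import structures.
From mathcomp Require Import all_boot all_order all_algebra.
From mathcomp Require Import all_classical all_reals all_analysis.
Set Implicit Arguments. Unset Strict Implicit. Unset Printing Implicit Defensive.
Import Order.TTheory GRing.Theory Num.Theory.
Local Open Scope ring_scope.
Local Open Scope classical_set_scope.

(* H is modelled as R^n ('rV[R]_n) with the standard inner product. *)
Definition inner (R : realType) (n : nat) (u v : 'rV[R]_n) : R :=
  \sum_(i < n) u 0 i * v 0 i.

Definition clam (R : realType) (n : nat) (lam : R) (u v : 'rV[R]_n) : \bar R :=
  if lam == 0 then (inner u v)%:E
  else if 0 < 1 + lam * inner u v then (ln (1 + lam * inner u v) / lam)%:E
  else -oo%E.

Definition phil (R : realType) (d : measure_display) (X : measurableType d)
  (m : {measure set X -> \bar R}) (n : nat) (T : X -> 'rV[R]_n) (lam : R)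
  (th : 'rV[R]_n) : \bar R :=
  lne (\int[m]_x expeR (clam lam th (T x)))%E.

Definition dom_phil (R : realType) (d : measure_display) (X : measurableType d)
  (m : {measure set X -> \bar R}) (n : nat) (T : X -> 'rV[R]_n) (lam : R)
  : set 'rV[R]_n := [set th | (phil m T lam th < +oo)%E].

Definition proper_phil (R : realType) (d : measure_display) (X : measurableType d)
  (m : {measure set X -> \bar R}) (n : nat) (T : X -> 'rV[R]_n) (lam : R) : Prop :=
  (forall th, phil m T lam th != -oo%E) /\ exists th, th \in dom_phil m T lam.

Definition supp (R : realType) (d : measure_display) (X : measurableType d)
  (n : nat) (T : X -> 'rV[R]_n) (lam : R) (th : 'rV[R]_n) : set X :=
  [set x | 0 < 1 + lam * inner th (T x)].

Definition is_density (R : realType) (d : measure_display) (X : measurableType d)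
  (m : {measure set X -> \bar R}) (p : X -> R) : Prop :=
  [/\ measurable_fun setT p, (forall x, 0 <= p x) & (\int[m]_x (p x)%:E = 1)%E].

Definition restr (R : realType) (d : measure_display) (X : measurableType d)
  (p : X -> R) (Y : set X) : X -> R := fun x => (\1_Y x : R) * p x.

Definition compatible (R : realType) (d : measure_display) (X : measurableType d)
  (m : {measure set X -> \bar R}) (n : nat) (T : X -> 'rV[R]_n) (lam : R)
  (th : 'rV[R]_n) (p : X -> R) : Prop :=
  let alpha := 1 - lam in
  let pS := restr p (supp T lam th) in
  (0 < \int[m]_x ((pS x) `^ alpha)%:E < +oo)%E /\
  forall i : 'I_n, (\int[m]_x (T x 0 i * (pS x) `^ alpha)%:E)%E \is a fin_num.

Definition escort (R : realType) (d : measure_display) (X : measurableType d)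
  (m : {measure set X -> \bar R}) (alpha : R) (p : X -> R) : X -> R :=
  fun x => (p x) `^ alpha / fine (\int[m]_y ((p y) `^ alpha)%:E)%E.

Definition expect (R : realType) (d : measure_display) (X : measurableType d)
  (m : {measure set X -> \bar R}) (n : nat) (T : X -> 'rV[R]_n) (q : X -> R)
  : 'rV[R]_n := \row_i fine (\int[m]_x (T x 0 i * q x)%:E)%E.

From HB Require Import structures.
From mathcomp Require Import all_boot all_order all_algebra.
From mathcomp Require Import all_classical all_reals all_analysis.
From mathcomp Require Import measurable_realfun.
Import Order.TTheory GRing.Theory Num.Theory.
Local Open Scope ring_scope.
Local Open Scope classical_set_scope.

(* The escort mean of [p_|S] is [c / Z] with [Z = int q] and [c = int T q],
   [q = p_|S ^ alpha], so [1 + lam <th, c / Z>] is [Z^-1] times the integral of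
   [(1 + lam <th, T>) q].  This integrand is nonnegative since [q] vanishes off
   [S], and it vanishes only where [q] does; as [Z > 0], [q] is not a.e. zero,
   hence the integral is positive and the escort mean lies in the support of
   the coupling. *)

Lemma inner_scaler (R : realType) (n : nat) (u v : 'rV[R]_n) (k : R) :
  inner u (k *: v) = k * inner u v.
Proof.
by rewrite /inner mulr_sumr; apply: eq_bigr => i _; rewrite mxE mulrCA.
Qed.

Lemma clam_fin_num (R : realType) (n : nat) (lam : R) (u v : 'rV[R]_n) :
  (clam lam u v \is a fin_num) = (lam == 0) || (0 < 1 + lam * inner u v).
Proof. by rewrite /clam; case: (lam == 0) => //; case: ifP. Qed.

Lemma restr_powR_eq0 (R : realType) (d : measure_display)
    (X : measurableType d) (p : X -> R) (Y : set X) (a : R) (x : X) :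
  a != 0 -> ~ Y x -> restr p Y x `^ a = 0.
Proof. by move=> a0 Yx; rewrite /restr indicE memNset // mul0r powR0. Qed.

Section PositiveIntegral.
Variables (R : realType) (d : measure_display) (X : measurableType d).
Variable m : {measure set X -> \bar R}.

Lemma ge0_integral_gt0 (f g : X -> R) :
  measurable_fun setT f -> measurable_fun setT g ->
  (forall x, 0 <= g x) -> (forall x, g x = 0 -> f x = 0) ->
  (0 < \int[m]_x (f x)%:E)%E -> (0 < \int[m]_x (g x)%:E)%E.
Proof.
move=> mf mg g_ge0 gf; apply: contraPP => /negP.
rewrite lt0e integral_ge0 ?andbT => [/negPn/eqP intg0|x _]; last by rewrite lee_fin.
have g_ae0 : ae_eq m setT (fun x => (g x)%:E) (cst 0%E).
  apply/(ae_eq_integral_abs m measurableT); first exact/measurable_EFinP.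
  by rewrite -intg0; apply: eq_integral => x _; rewrite gee0_abs ?lee_fin.
have f_ae0 : ae_eq m setT (fun x => (f x)%:E) (cst 0%E).
  by apply: filterS g_ae0 => x /= gx0 /gx0 [] /gf ->.
rewrite (ae_eq_integral _ _ measurableT _ (measurable_cst _) f_ae0).
  by rewrite integral0 ltxx.
exact/measurable_EFinP.
Qed.

End PositiveIntegral.

Section ExpectationOfStatistic.
Variables (R : realType) (d : measure_display) (X : measurableType d).
Variable m : {measure set X -> \bar R}.
Variables (n : nat) (T : X -> 'rV[R]_n).
Hypothesis mT : forall i : 'I_n, measurable_fun setT (fun x => T x 0 i).

Lemma measurable_inner (th : 'rV[R]_n) :
  measurable_fun setT (fun x => inner th (T x)).
Proof.
apply: measurable_sum => i.
by apply: measurable_funM => //; exact: measurable_cst.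
Qed.

Lemma measurable_coupling_arg (lam : R) (th : 'rV[R]_n) :
  measurable_fun setT (fun x => 1 + lam * inner th (T x)).
Proof.
apply: measurable_funD; first exact: measurable_cst.
by apply: measurable_funM; [exact: measurable_cst | exact: measurable_inner].
Qed.

Lemma measurable_supp (lam : R) (th : 'rV[R]_n) : measurable (supp T lam th).
Proof.
have := measurable_coupling_arg lam th measurableT `]0%R, +oo[%classic (measurable_itv _).
rewrite setTI; congr measurable; apply/seteqP; split => x /=;
  by rewrite /supp /= in_itv /= andbT.
Qed.

Section Integrable.
Variable q : X -> R.
Hypothesis intTq : forall i : 'I_n, m.-integrable setT (fun x => (T x 0 i * q x)%:E).

Lemma expect_scaler (k : R) : expect m T (fun x => q x * k) = k *: expect m T q.
Proof.
apply/rowP => i; rewrite !mxE.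
under eq_integral do rewrite mulrA EFinM.
by rewrite integralZr // fineM // ?(integrable_fin_num _ (intTq i)) // mulrC.
Qed.

Lemma integral_inner_expect (th : 'rV[R]_n) :
  (\int[m]_x (inner th (T x) * q x)%:E = (inner th (expect m T q))%:E)%E.
Proof.
under eq_integral do rewrite /inner mulr_suml -sumEFin.
rewrite integral_sum //; last first.
  by move=> i; under eq_fun do rewrite -mulrA EFinM; exact: integrableZl.
rewrite /inner -sumEFin; apply: eq_bigr => i _.
under eq_integral do rewrite -mulrA EFinM.
by rewrite integralZl // mxE EFinM fineK // (integrable_fin_num _ (intTq i)).
Qed.

Lemma integrable_inner_mulr (th : 'rV[R]_n) :
  m.-integrable setT (fun x => (inner th (T x) * q x)%:E).
Proof.
under eq_fun do rewrite /inner mulr_suml -sumEFin.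
apply: integrable_sum => // i _.
by under eq_fun do rewrite -mulrA EFinM; exact: integrableZl.
Qed.

Lemma integral_affine_inner (lam : R) (th : 'rV[R]_n) :
  m.-integrable setT (fun x => (q x)%:E) ->
  (\int[m]_x ((1 + lam * inner th (T x)) * q x)%:E =
   (fine (\int[m]_x (q x)%:E) + lam * inner th (expect m T q))%:E)%E.
Proof.
move=> intq.
under eq_integral do rewrite mulrDl mul1r -mulrA EFinD EFinM.
rewrite integralD //; last exact: integrableZl (integrable_inner_mulr th).
rewrite integralZl ?integral_inner_expect //; last exact: integrable_inner_mulr.
by rewrite EFinD EFinM fineK ?(integrable_fin_num _ intq).
Qed.

End Integrable.

End ExpectationOfStatistic.

Theorem lemma1 (R : realType) (d : measure_display) (X : measurableType d)
  (m : {measure set X -> \bar R}) (n : nat) (T : X -> 'rV[R]_n)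
  (lam : R) (th : 'rV[R]_n) (p : X -> R) :
  (forall i : 'I_n, measurable_fun setT (fun x => T x 0 i)) ->
  0 < 1 - lam ->
  proper_phil m T lam ->
  th \in dom_phil m T lam ->
  is_density m p ->
  compatible m T lam th p ->
  clam lam th (expect m T (escort m (1 - lam) (restr p (supp T lam th))))
    \is a fin_num.
Proof.
move=> mT a_gt0 _ _ [mp _ _] [/andP[Zgt0 Zlt] cfin].
rewrite clam_fin_num; apply/orP; right.
set S := supp T lam th in Zgt0 Zlt cfin *.
set q := fun x => restr p S x `^ (1 - lam).
have mq : measurable_fun setT q.
  apply: measurableT_comp (measurable_powR _) _.
  by apply: measurable_funM => //; exact/measurable_indic/measurable_supp.
have intq : m.-integrable setT (fun x => (q x)%:E).
  apply/integrableP; split; first exact/measurable_EFinP.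
  by rewrite integral_fin_num_abs // ge0_fin_numE ?(ltW Zgt0).
have intTq i : m.-integrable setT (fun x => (T x 0 i * q x)%:E).
  apply/integrableP; split; first exact/measurable_EFinP/measurable_funM.
  by rewrite integral_fin_num_abs //; exact: measurable_funM.
set Z := fine (\int[m]_x (q x)%:E)%E.
have Z_gt0 : 0 < Z by rewrite fine_gt0 // Zgt0 Zlt.
rewrite (_ : escort _ _ _ = fun x => q x * Z^-1) // expect_scaler //.
rewrite inner_scaler mulrCA (_ : 1 + _ = (Z + lam * inner th (expect m T q)) / Z); last first.
  by rewrite mulrDl divff ?lt0r_neq0 // mulrC.
rewrite divr_gt0 // -lte_fin -integral_affine_inner //.
apply: ge0_integral_gt0 Zgt0 => //.
- exact/measurable_funM/mq/measurable_coupling_arg.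
- move=> x; have [Sx|Sx] := pselect (S x).
    by rewrite mulr_ge0 ?powR_ge0 ?ltW.
  by rewrite /q restr_powR_eq0 ?lt0r_neq0 // mulr0.
- move=> x /eqP; rewrite mulf_eq0 => /orP[/eqP w0 | /eqP //].
  by rewrite /q restr_powR_eq0 ?lt0r_neq0 // /S /supp /= w0 ltxx.
Qed.
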